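(* Fix $p$ with $0<p<1$ and for each positive integer $d$ define $\theta(d)=\dfrac{p}{d-(d-1)p}$. For $\mathbf{U}\in\mathbb{R}^{m\times d}$, $\mathbf{V}\in\mathbb{R}^{n\times d}$ with columns $\mathbf{u}_k,\mathbf{v}_k$, let $\Omega_{\mathrm{dropout}}(\mathbf{U},\mathbf{V})=\sum_{k=1}^d\|\mathbf{u}_k\|_2^2\|\mathbf{v}_k\|_2^2$. Define, for $\mathbf{X}\in\mathbb{R}^{m\times n}$, $$\Lambda(\mathbf{X})=\inf_{d,\mathbf{U},\mathbf{V}}\ \frac{1-\theta(d)}{\theta(d)}\,\Omega_{\mathrm{dropout}}(\mathbf{U},\mathbf{V})\quad\text{subject to } d\ge\operatorname{rank}(\mathbf{X}),\ \mathbf{U}\in\mathbb{R}^{m\times d},\ \mathbf{V}\in\mathbb{R}^{n\times d},\ \mathbf{U}\mathbf{V}^\top=\mathbf{X}.$$ Then the lower convex envelope of $\Lambda$ is $\mathbf{X}\mapsto\frac{1-p}{p}\|\mathbf{X}\|_\star^2$.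
   Context: $\|\mathbf{X}\|_\star$ is the nuclear norm (sum of singular values). The lower convex envelope of a function $f$ is the pointwise supremum of all convex functions $g$ with $g\le f$. $\|\cdot\|_2$ is the Euclidean norm. *)

From HB Require Import structures.
From Stdlib Require Import ClassicalEpsilon.
From mathcomp Require Import all_boot all_order all_algebra.
From mathcomp Require Import boolp classical_sets reals.
Set Implicit Arguments. Unset Strict Implicit. Unset Printing Implicit Defensive.
Import Order.TTheory GRing.Theory Num.Theory.
Local Open Scope ring_scope.
Local Open Scope classical_set_scope.

Definition theta (R : realType) (p : R) (d : nat) : R :=
  p / (d%:R - (d.-1)%:R * p).

Definition Omega_dropout (R : realType) (m n d : nat)
  (U : 'M[R]_(m, d)) (V : 'M[R]_(n, d)) : R :=
  \sum_(k < d) ((\sum_(i < m) U i k ^+ 2) * (\sum_(j < n) V j k ^+ 2)).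

Definition Lambda (R : realType) (p : R) (m n : nat) (X : 'M[R]_(m, n)) : R :=
  inf [set r : R | exists (d : nat) (U : 'M[R]_(m, d)) (V : 'M[R]_(n, d)),
        [/\ (0 < d)%N, (\rank X <= d)%N, U *m V^T = X &
            r = (1 - theta p d) / theta p d * Omega_dropout U V]].

(* s is a (full, length n) list of singular values of X: the nonnegative
   square roots of the eigenvalues of X^T X, counted with multiplicity. *)
Definition is_singular_values (R : realType) (m n : nat) (X : 'M[R]_(m, n))
  (s : 'I_n -> R) : Prop :=
  (forall i, 0 <= s i) /\
  char_poly (X^T *m X) = \prod_(i < n) ('X - (s i ^+ 2)%:P).

Definition nuclear_norm (R : realType) (m n : nat) (X : 'M[R]_(m, n)) : R :=
  \sum_(i < n) (epsilon (inhabits (fun _ : 'I_n => (0 : R)))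
                        (is_singular_values X)) i.

Definition convex_fun (R : realType) (m n : nat) (g : 'M[R]_(m, n) -> R) : Prop :=
  forall (X Y : 'M[R]_(m, n)) (t : R), 0 <= t -> t <= 1 ->
    g (t *: X + (1 - t) *: Y) <= t * g X + (1 - t) * g Y.

Definition lower_convex_envelope (R : realType) (m n : nat)
  (f : 'M[R]_(m, n) -> R) (X : 'M[R]_(m, n)) : R :=
  sup [set y : R | exists g : 'M[R]_(m, n) -> R,
         [/\ convex_fun g, (forall Y, g Y <= f Y) & y = g X]].

From HB Require Import structures.
From Stdlib Require Import ClassicalEpsilon.
From mathcomp Require Import all_boot all_order all_algebra.
From mathcomp Require Import boolp classical_sets reals.
From mathcomp Require Import complex ring.
Set Implicit Arguments. Unset Strict Implicit. Unset Printing Implicit Defensive.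
Import Order.TTheory GRing.Theory Num.Theory.
Local Open Scope ring_scope.

(* Diagonalising [X^T X] by an orthogonal [Q] writes [X = sum_k s_k w_k q_k^T]
   with [s] the singular values and columns [w_k], [q_k] of norm at most 1.
   Pairing a factorisation [X = U V^T] against [w] and [q] gives
   [||X||_* <= sum_k ||u_k|| ||v_k||]; since
   [(1 - theta d) / theta d = d (1 - p) / p], Cauchy-Schwarz turns this into
   [(1 - p) / p ||X||_*^2 <= Lambda X], and the left side is convex.
   Conversely [X] is the convex combination, with weights [s_k / ||X||_*], of
   the rank-one matrices [||X||_* w_k q_k^T], on each of which a convex
   minorant of [Lambda] is at most [(1 - p) / p ||X||_*^2] (take [d = 1]);
   Jensen's inequality concludes. *)

Lemma sum_mul_sqr_le (R : realDomainType) d (a b : 'I_d -> R) :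
  (\sum_k a k * b k) ^+ 2 <= (\sum_k a k ^+ 2) * (\sum_k b k ^+ 2).
Proof.
set A := \sum_k a k ^+ 2; set B := \sum_k b k ^+ 2; set C := \sum_k a k * b k.
have lagrange : \sum_i \sum_j (a i * b j - a j * b i) ^+ 2 = 2 * (A * B - C ^+ 2).
  have E1 : \sum_i \sum_j a i ^+ 2 * b j ^+ 2 = A * B by rewrite big_distrlr.
  have E2 : \sum_i \sum_j a j ^+ 2 * b i ^+ 2 = A * B.
    by rewrite exchange_big big_distrlr.
  have E3 : \sum_i \sum_j (a i * b i) * (a j * b j) = C ^+ 2.
    by rewrite expr2 big_distrlr.
  rewrite (_ : 2 * _ = A * B + A * B - 2 * C ^+ 2); last by ring.
  rewrite -{1}E1 -E2 -E3 mulr_sumr -big_split /= -sumrB; apply: eq_bigr => i _.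
  rewrite mulr_sumr -big_split /= -sumrB; apply: eq_bigr => j _.
  by ring.
have : 0 <= 2 * (A * B - C ^+ 2).
  by rewrite -lagrange; do 2!(apply: sumr_ge0 => ? _); exact: sqr_ge0.
by rewrite pmulr_rge0 // subr_ge0.
Qed.

Lemma mxtrace_mul_trmx (R : pzSemiRingType) m n (A B : 'M[R]_(m, n)) :
  \tr (A *m B^T) = \sum_j \sum_i A i j * B i j.
Proof.
rewrite exchange_big; apply: eq_bigr => i _; rewrite mxE.
by apply: eq_bigr => j _; rewrite mxE.
Qed.

Lemma gram_diag (R : pzSemiRingType) m n (U : 'M[R]_(m, n)) k :
  (U^T *m U) k k = \sum_i U i k ^+ 2.
Proof. by rewrite mxE; apply: eq_bigr => i _; rewrite mxE expr2. Qed.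

Lemma mulmx_trmx_col_sum (R : pzSemiRingType) m n d
    (A : 'M[R]_(m, d)) (B : 'M[R]_(n, d)) :
  A *m B^T = \sum_k col k A *m (col k B)^T.
Proof.
apply/matrixP => i j; rewrite summxE mxE; apply: eq_bigr => k _.
by rewrite !mxE big_ord1 !mxE.
Qed.

Lemma sqr_sum_le (R : realDomainType) d (a : 'I_d -> R) :
  (\sum_k a k) ^+ 2 <= d%:R * \sum_k a k ^+ 2.
Proof.
have E1 : \sum_k a k * 1 = \sum_k a k by apply: eq_bigr => k _; rewrite mulr1.
have E2 : \sum_(k < d) 1 ^+ 2 = d%:R :> R.
  by rewrite (eq_bigr (fun _ => 1)) ?sumr_const ?card_ord // => k _; rewrite expr1n.
by rewrite mulrC -E1 -E2; exact: sum_mul_sqr_le.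
Qed.

Lemma char_poly_conj (F : fieldType) n (P A : 'M[F]_n) : P \in unitmx ->
  char_poly (invmx P *m A *m P) = char_poly A.
Proof.
move=> Pu; rewrite /char_poly.
have -> : char_poly_mx (invmx P *m A *m P) =
    map_mx polyC (invmx P) *m char_poly_mx A *m map_mx polyC P.
  rewrite /char_poly_mx mulmxBr mulmxBl !map_mxM; congr (_ - _).
  by rewrite -mulmxA -scalar_mxC mulmxA -map_mxM mulVmx // map_mx1 mul1mx.
rewrite !det_mulmx !det_map_mx mulrC mulrA -rmorphM /= -det_mulmx mulmxV //.
by rewrite det1 rmorph1 mul1r.
Qed.

(* The spectral theorem over [complex R] yields a root of the characteristic
   polynomial that is real, since [A] is real symmetric hence hermitian. *)
Lemma symmetric_eigenvalue (R : rcfType) n (A : 'M[R]_n.+1) : A^T = A ->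
  exists l, eigenvalue A l.
Proof.
move=> Asym; pose f := real_complex R; pose Ac := map_mx f A.
have Acs : Ac \is symmetricmx.
  by apply/is_hermitianmxP; rewrite expr0 scale1r map_mx_id // /Ac map_trmx Asym.
have Acr : Ac \is a realmx.
  by apply/mxOverP => i j; rewrite mxE; apply/complex_realP; exists (A i j).
have spr := hermitian_spectral_diag_real (realsym_hermsym Acs Acr).
have := orthomx_spectralP (symmetric_normalmx Acs Acr).
set P := spectralmx Ac; set sp := spectral_diag Ac => Ae.
have cpe : char_poly Ac = \prod_(i < n.+1) ('X - (sp 0 i)%:P).
  rewrite Ae char_poly_conj ?spectral_unit // char_poly_trig ?diag_mx_is_trig //.
  by apply: eq_bigr => i _; rewrite mxE eqxx mulr1n.
have r0 : sp 0 0 \is Num.real by exact: (mxOverP spr).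
exists (complex.Re (sp 0 0)); rewrite eigenvalue_root_char.
apply/rootP; apply: (fmorph_inj f); rewrite rmorph0 -horner_map /=.
rewrite map_char_poly -/Ac cpe /f (RRe_real r0) horner_prod.
by rewrite big_ord_recl /= !hornerE subrr mul0r.
Qed.

Section OrthogonalReduction.
Variable R : realFieldType.

Lemma gram_diag_eq0 n (u : 'cV[R]_n) : (u^T *m u) 0 0 = 0 -> u = 0.
Proof.
rewrite gram_diag => /eqP; rewrite psumr_eq0 => [/allP u0|i _]; last exact: sqr_ge0.
apply/matrixP => i j; rewrite ord1 mxE.
by apply/eqP; rewrite -sqrf_eq0; apply: u0; rewrite mem_index_enum.
Qed.

Lemma trmx_mul_cV n (u v : 'cV[R]_n) : u^T *m v = v^T *m u.
Proof. by rewrite [RHS]mx11_scalar -tr_scalar_mx -mx11_scalar trmx_mul trmxK. Qed.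

Lemma householder n (y : 'cV[R]_n.+1) : y^T *m y = 1%:M ->
  exists H : 'M[R]_n.+1, [/\ H^T = H, H *m H = 1%:M & H *m delta_mx 0 0 = y].
Proof.
move=> yy; pose e : 'cV[R]_n.+1 := delta_mx 0 0; rewrite -/e.
have ee : e^T *m e = 1%:M.
  by rewrite trmx_delta mul_delta_mx; apply/matrixP => i j; rewrite !ord1 !mxE.
set w := y - e; set s := (w^T *m w) 0 0; set t := (w^T *m e) 0 0; set c := 2 / s.
have wwE : w^T *m w = s%:M by rewrite [LHS]mx11_scalar.
have weE : w^T *m e = t%:M by rewrite [LHS]mx11_scalar.
have st : s = - 2 * t.
  rewrite /s /t /w !linearB /= !mulmxBl ?mulmxBr yy ee (trmx_mul_cV e y) !mxE.
  by rewrite ?eqxx /=; ring.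
have cs : c ^+ 2 * s = 2 * c.
  by rewrite /c; have [->|s0] := eqVneq s 0; [rewrite invr0 !mulr0 | field].
exists (1%:M - c *: (w *m w^T)); split.
- by rewrite linearB /= trmx1 linearZ /= trmx_mul trmxK.
- have WW : w *m w^T *m (w *m w^T) = s *: (w *m w^T).
    by rewrite -mulmxA (mulmxA w^T) wwE mul_scalar_mx scalemxAr.
  rewrite mulmxBl !mulmxBr !mul1mx ?mulmx1 -!scalemxAl -!scalemxAr WW !scalerA.
  by rewrite -expr2 cs mulr_natl -scalerMnl mulr2n opprB addrK subrK.
- rewrite mulmxBl mul1mx -scalemxAl -mulmxA weE mul_mx_scalar scalerA.
  have [t0|tn0] := eqVneq t 0.
    have /eqP : w = 0 by apply: gram_diag_eq0; rewrite -/s st t0 mulr0.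
    by rewrite t0 mulr0 scale0r subr0 subr_eq0 => /eqP.
  have -> : c * t = -1 by rewrite /c st; field.
  by rewrite scaleN1r opprK /w addrC subrK.
Qed.

End OrthogonalReduction.

Lemma symmetric_unit_eigenvector (R : rcfType) n (A : 'M[R]_n.+1) : A^T = A ->
  exists l (y : 'cV[R]_n.+1), A *m y = l *: y /\ y^T *m y = 1%:M.
Proof.
move=> As; have [l /eigenvalueP [v vA vn0]] := symmetric_eigenvalue As.
pose s := (v^T^T *m v^T) 0 0.
have s0 : 0 <= s by rewrite /s gram_diag sumr_ge0 // => i _; exact: sqr_ge0.
have sn0 : s != 0.
  apply: contraNneq vn0 => /gram_diag_eq0 /(congr1 trmx); rewrite trmxK => ->.
  by rewrite linear0.
exists l, ((Num.sqrt s)^-1 *: v^T); split.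
  by rewrite -scalemxAr -[A]As -trmx_mul vA linearZ /= scalerA mulrC -scalerA.
rewrite [(_ *: v^T)^T]linearZ /= -scalemxAl -scalemxAr scalerA trmxK.
rewrite [v *m v^T]mx11_scalar (_ : (v *m v^T) 0 0 = s); last by rewrite /s trmxK.
rewrite scale_scalar_mx -[in X in _ * X](sqr_sqrtr s0) -expr2 -exprMn mulVf ?expr1n //.
by rewrite sqrtr_eq0 -ltNge lt_def sn0.
Qed.

(* Conjugating by a Householder reflection [H] sending [e_0] to a unit
   eigenvector makes [e_0] an eigenvector of the symmetric [H A H], which is
   therefore block diagonal; induct on the lower block. *)
Lemma symmetric_orthodiag (R : rcfType) n (A : 'M[R]_n) : A^T = A ->
  exists Q : 'M[R]_n, Q^T *m Q = 1%:M /\ is_diag_mx (Q^T *m A *m Q).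
Proof.
elim: n A => [|n IH] A As.
  by exists 1%:M; rewrite trmx1 mulmx1; split=> //; apply/is_diag_mxP => -[].
have [l [y [Ay yy]]] := symmetric_unit_eigenvector As.
have [H [Hs HH He]] := householder yy.
have [B BE] : exists B : 'M[R]_(1 + n), B = H *m A *m H by eexists.
have Bs : B^T = B by rewrite BE !trmx_mul Hs As mulmxA.
have Be : B *m (delta_mx 0 0 : 'cV_n.+1) = l *: delta_mx 0 0.
  by rewrite BE -!mulmxA He Ay -scalemxAr -He mulmxA HH mul1mx.
have B_col0 (i : 'I_(1 + n)) : i != 0 -> B i 0 = 0.
  move=> i0; have := congr1 (fun M : 'cV[R]_n.+1 => M i 0) Be.
  by rewrite /= -colE !mxE (negPf i0) mulr0.
have l0 : lshift n (0 : 'I_1) = 0 by exact: val_inj.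
have Bur : ursubmx B = 0.
  by apply/matrixP => i j; rewrite !mxE ord1 -Bs mxE l0 B_col0.
have Bdl : dlsubmx B = 0.
  by apply/matrixP => i j; rewrite !mxE ord1 l0 B_col0.
have [|Q' [Q'Q' Q'd]] := IH (drsubmx B); first by rewrite trmx_drsub Bs.
pose K : 'M[R]_(1 + n) := block_mx 1%:M 0 0 Q'.
have KK : K^T *m K = 1%:M.
  rewrite tr_block_mx mulmx_block !trmx0 !mulmx0 !mul0mx !addr0 !add0r.
  by rewrite trmx1 mulmx1 Q'Q' -scalar_mx_block.
exists (H *m K); split.
  by rewrite trmx_mul mulmxA -(mulmxA K^T) Hs HH mulmx1 KK.
have -> : (H *m K)^T *m A *m (H *m K) = K^T *m B *m K.
  by rewrite trmx_mul Hs BE !mulmxA.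
rewrite -(submxK B) Bur Bdl tr_block_mx !trmx0 trmx1 !mulmx_block.
rewrite !mulmx0 !mul0mx !addr0 !add0r !mulmx1 !mul1mx.
by rewrite mul0mx (@is_diag_block_mx _ 1 n 1 n) // !eqxx mx11_is_diag.
Qed.

Section ColumnNorms.
Variable R : rcfType.

Definition col_norm m n (U : 'M[R]_(m, n)) k := Num.sqrt (\sum_i U i k ^+ 2).

Definition factor_norm m n d (U : 'M[R]_(m, d)) (V : 'M[R]_(n, d)) :=
  \sum_k col_norm U k * col_norm V k.

(* [0^-1 = 0]: zero columns stay zero. *)
Definition normalize_cols m n (G : 'M[R]_(m, n)) :=
  G *m diag_mx (\row_k (col_norm G k)^-1).

Lemma col_norm_ge0 m n (U : 'M[R]_(m, n)) k : 0 <= col_norm U k.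
Proof. exact: sqrtr_ge0. Qed.

Lemma col_norm0 m n k : col_norm (0 : 'M[R]_(m, n)) k = 0.
Proof. by rewrite /col_norm big1 ?sqrtr0 // => i _; rewrite mxE expr0n. Qed.

Lemma col_norm_sqr m n (U : 'M[R]_(m, n)) k : col_norm U k ^+ 2 = \sum_i U i k ^+ 2.
Proof. by rewrite sqr_sqrtr // sumr_ge0 // => i _; exact: sqr_ge0. Qed.

Lemma col_norm_col m n (U : 'M[R]_(m, n)) k : col_norm (col k U) 0 = col_norm U k.
Proof. by congr Num.sqrt; apply: eq_bigr => i _; rewrite mxE. Qed.

Lemma col_normZ m n a (U : 'M[R]_(m, n)) k : col_norm (a *: U) k = `|a| * col_norm U k.
Proof.
rewrite /col_norm (eq_bigr (fun i => a ^+ 2 * U i k ^+ 2)) => [|i _]; last first.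
  by rewrite mxE exprMn.
by rewrite -mulr_sumr sqrtrM ?sqr_ge0 // sqrtr_sqr.
Qed.

Lemma col_norm_eq0 m n (U : 'M[R]_(m, n)) k : col_norm U k = 0 -> col k U = 0.
Proof.
move/(congr1 (fun x => x ^+ 2)); rewrite -col_norm_col col_norm_sqr expr0n -gram_diag.
exact: gram_diag_eq0.
Qed.

Lemma col_norm_orthomx m n d (M : 'M[R]_(m, n)) (V : 'M[R]_(n, d)) k :
  M^T *m M = 1%:M -> col_norm (M *m V) k = col_norm V k.
Proof.
by move=> MM; rewrite /col_norm -!gram_diag trmx_mul -mulmxA (mulmxA M^T) MM mul1mx.
Qed.

Lemma col_norm_orthomx1 n (Q : 'M[R]_n) k : Q^T *m Q = 1%:M -> col_norm Q k = 1.
Proof. by move=> QQ; rewrite /col_norm -gram_diag QQ mxE eqxx sqrtr1. Qed.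

Lemma col_dot_le m n (A B : 'M[R]_(m, n)) k :
  \sum_i A i k * B i k <= col_norm A k * col_norm B k.
Proof.
rewrite -sqrtrM ?sumr_ge0 // => [|i _]; last exact: sqr_ge0.
apply: le_trans (ler_norm _) _.
by rewrite -sqrtr_sqr ler_wsqrtr // sum_mul_sqr_le.
Qed.

(* [W W^T] is an orthogonal projection, so [U^T U - (W^T U)^T (W^T U)] is
   the Gram matrix of [(1 - W W^T) U]. *)
Lemma col_norm_trmx_mul_le m n d (W : 'M[R]_(m, n)) (U : 'M[R]_(m, d)) k :
  W *m (W^T *m W) = W -> col_norm (W^T *m U) k <= col_norm U k.
Proof.
move=> WWW; rewrite ler_wsqrtr // -!gram_diag -subr_ge0.
pose P := W *m W^T; pose r := (1%:M - P) *m U.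
have PP : P *m P = P by rewrite /P mulmxA -(mulmxA W) WWW.
have IPP : (1%:M - P) *m (1%:M - P) = 1%:M - P.
  by rewrite mulmxBl mul1mx !mulmxBr mulmx1 PP subrr subr0.
have rr : r^T *m r = U^T *m U - (W^T *m U)^T *m (W^T *m U).
  rewrite /r trmx_mul linearB /= trmx1 (_ : P^T = P); last by rewrite trmx_mul trmxK.
  rewrite -mulmxA (mulmxA (1%:M - P)) IPP mulmxBl mul1mx mulmxBr.
  by rewrite trmx_mul trmxK /P !mulmxA.
have -> : (U^T *m U) k k - ((W^T *m U)^T *m (W^T *m U)) k k = (r^T *m r) k k.
  by rewrite rr !mxE.
by rewrite gram_diag sumr_ge0 // => i _; exact: sqr_ge0.
Qed.

Lemma normalize_colsE m n (G : 'M[R]_(m, n)) i k :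
  normalize_cols G i k = G i k / col_norm G k.
Proof. by rewrite /normalize_cols mul_mx_diag !mxE. Qed.

Lemma col_normalize_cols m n (G : 'M[R]_(m, n)) k :
  col k G = col_norm G k *: col k (normalize_cols G).
Proof.
apply/matrixP => i j; rewrite mxE [RHS]mxE mxE normalize_colsE.
have [s0|sn0] := eqVneq (col_norm G k) 0; last by rewrite mulrC divfK.
by have /matrixP/(_ i j) := col_norm_eq0 s0; rewrite s0 mul0r !mxE.
Qed.

Lemma col_norm_normalize_cols_le1 m n (G : 'M[R]_(m, n)) k :
  col_norm (normalize_cols G) k <= 1.
Proof.
have colW : col k (normalize_cols G) = (col_norm G k)^-1 *: col k G.
  by apply/matrixP => i j; rewrite mxE normalize_colsE [RHS]mxE mxE mulrC.
rewrite -col_norm_col colW col_normZ col_norm_col ger0_norm ?invr_ge0 ?col_norm_ge0 //.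
by have [->|s0] := eqVneq (col_norm G k) 0; rewrite ?mulr0 // mulVf.
Qed.

Lemma normalize_cols_pairing m n (G : 'M[R]_(m, n)) k :
  ((normalize_cols G)^T *m G) k k = col_norm G k.
Proof.
rewrite mxE (eq_bigr (fun i => G i k ^+ 2 / col_norm G k)) => [|i _]; last first.
  by rewrite mxE normalize_colsE mulrAC expr2.
rewrite -mulr_suml -col_norm_sqr expr2.
by have [->|s0] := eqVneq (col_norm G k) 0; rewrite ?mul0r ?mulfK.
Qed.

Lemma normalize_cols_partial_isometry m n (G : 'M[R]_(m, n)) :
  is_diag_mx (G^T *m G) ->
  normalize_cols G *m ((normalize_cols G)^T *m normalize_cols G) = normalize_cols G.
Proof.
move=> /is_diag_mxP Gd.
have GG : G^T *m G = diag_mx (\row_k col_norm G k ^+ 2).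
  apply/matrixP => i j; rewrite [RHS]mxE [in RHS]mxE.
  have [<-|ij] := eqVneq i j; first by rewrite mulr1n col_norm_sqr gram_diag.
  by rewrite mulr0n Gd // (inj_eq val_inj).
rewrite /normalize_cols trmx_mul tr_diag_mx -!mulmxA (mulmxA G^T) GG !mulmx_diag.
congr (G *m diag_mx _); apply/rowP => k; rewrite !mxE.
by have [->|s0] := eqVneq (col_norm G k) 0; [rewrite invr0 !mul0r | field].
Qed.

Lemma factor_norm_row_mx m n d1 d2 (U1 : 'M[R]_(m, d1)) (U2 : 'M[R]_(m, d2))
    (V1 : 'M[R]_(n, d1)) (V2 : 'M[R]_(n, d2)) :
  factor_norm (row_mx U1 U2) (row_mx V1 V2) = factor_norm U1 V1 + factor_norm U2 V2.
Proof.
rewrite /factor_norm big_split_ord /=; congr (_ + _); apply: eq_bigr => k _;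
  congr (Num.sqrt _ * Num.sqrt _);
  by apply: eq_bigr => i _; rewrite ?row_mxEl ?row_mxEr.
Qed.

Lemma factor_normZ m n d a (U : 'M[R]_(m, d)) (V : 'M[R]_(n, d)) :
  factor_norm (a *: U) V = `|a| * factor_norm U V.
Proof.
by rewrite /factor_norm mulr_sumr; apply: eq_bigr => k _; rewrite col_normZ mulrA.
Qed.

End ColumnNorms.

Section NuclearNorm.
Variable R : realType.

Definition right_singular_basis m n (X : 'M[R]_(m, n)) (Q : 'M[R]_n) :=
  Q^T *m Q = 1%:M /\ is_diag_mx ((X *m Q)^T *m (X *m Q)).

Lemma right_singular_basis_exists m n (X : 'M[R]_(m, n)) :
  exists Q, right_singular_basis X Q.
Proof.
have [|Q [QQ Qd]] := @symmetric_orthodiag _ _ (X^T *m X).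
  by rewrite trmx_mul trmxK.
by exists Q; split => //; move: Qd; rewrite trmx_mul !mulmxA.
Qed.

Lemma singular_values_col_norm m n (X : 'M[R]_(m, n)) Q :
  right_singular_basis X Q -> is_singular_values X (col_norm (X *m Q)).
Proof.
move=> [QQ XQd]; split=> [k|]; first exact: col_norm_ge0.
have [_ Qu] := mulmx1_unit QQ.
have QV : invmx Q = Q^T by rewrite -[invmx Q]mul1mx -QQ -mulmxA mulmxV ?mulmx1.
rewrite -(char_poly_conj _ Qu) QV (_ : Q^T *m _ *m Q = (X *m Q)^T *m (X *m Q)).
  rewrite char_poly_trig ?is_diag_mx_is_trig //; apply: eq_bigr => k _.
  by rewrite col_norm_sqr gram_diag.
by rewrite trmx_mul !mulmxA.
Qed.

(* Singular values are unique up to order, being the square roots of the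
   roots of [char_poly (X^T X)]. *)
Lemma nuclear_norm_singular m n (X : 'M[R]_(m, n)) s :
  is_singular_values X s -> nuclear_norm X = \sum_i s i.
Proof.
move=> [s0 sX]; rewrite /nuclear_norm; set e := epsilon _ _.
have [e0 eX] : is_singular_values X e by apply: epsilon_spec; exists s.
have sum_sqrt (t : 'I_n -> R) : (forall k, 0 <= t k) ->
    \sum_k t k = \sum_(x <- [seq t k ^+ 2 | k <- index_enum 'I_n]) Num.sqrt x.
  by move=> t0; rewrite big_map; apply: eq_bigr => k _; rewrite sqrtr_sqr ger0_norm.
rewrite (sum_sqrt _ e0) (sum_sqrt _ s0); apply: perm_big; apply: prod_XsubC_eq.
by rewrite !big_map -eX -sX.
Qed.

Lemma nuclear_normE m n (X : 'M[R]_(m, n)) Q :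
  right_singular_basis X Q -> nuclear_norm X = \sum_k col_norm (X *m Q) k.
Proof. by move/singular_values_col_norm/nuclear_norm_singular. Qed.

Lemma nuclear_norm_ge0 m n (X : 'M[R]_(m, n)) : 0 <= nuclear_norm X.
Proof.
have [Q /nuclear_normE ->] := right_singular_basis_exists X.
by apply: sumr_ge0 => k _; exact: col_norm_ge0.
Qed.

(* With [G = X Q] and [W] its column-normalisation, [||X||_* = tr (W^T X Q)],
   and [W^T], [Q^T] do not increase column norms. *)
Lemma nuclear_norm_le_factor_norm m n d (U : 'M[R]_(m, d)) (V : 'M[R]_(n, d)) :
  nuclear_norm (U *m V^T) <= factor_norm U V.
Proof.
have [Q oQ] := right_singular_basis_exists (U *m V^T); have [QQ Gd] := oQ.
rewrite (nuclear_normE oQ); set G := U *m V^T *m Q; set W := normalize_cols G.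
have -> : \sum_k col_norm G k = \tr ((W^T *m U) *m (Q^T *m V)^T).
  rewrite /mxtrace; under eq_bigr do rewrite -normalize_cols_pairing -/W.
  by rewrite /G [(Q^T *m V)^T]trmx_mul trmxK !mulmxA.
rewrite mxtrace_mul_trmx; apply: ler_sum => j _; apply: le_trans (col_dot_le _ _ j) _.
rewrite [col_norm (Q^T *m V) j]col_norm_orthomx ?trmxK ?(mulmx1C QQ) //.
rewrite ler_wpM2r ?col_norm_ge0 //.
by apply: col_norm_trmx_mul_le; exact: normalize_cols_partial_isometry.
Qed.

Lemma nuclear_norm_attained m n (X : 'M[R]_(m, n)) :
  exists2 Q : 'M[R]_n, X *m Q *m Q^T = X & factor_norm (X *m Q) Q = nuclear_norm X.
Proof.
have [Q oQ] := right_singular_basis_exists X; have [QQ _] := oQ.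
exists Q; first by rewrite -mulmxA (mulmx1C QQ) mulmx1.
rewrite (nuclear_normE oQ); apply: eq_bigr => k _.
by rewrite col_norm_orthomx1 ?mulr1.
Qed.

Lemma ler_nuclear_normD m n (X Y : 'M[R]_(m, n)) :
  nuclear_norm (X + Y) <= nuclear_norm X + nuclear_norm Y.
Proof.
have [Q1 e1 <-] := nuclear_norm_attained X; have [Q2 e2 <-] := nuclear_norm_attained Y.
rewrite -factor_norm_row_mx -{1}e1 -{1}e2 -mul_row_col -tr_row_mx.
exact: nuclear_norm_le_factor_norm.
Qed.

Lemma ler_nuclear_normZ m n a (X : 'M[R]_(m, n)) :
  nuclear_norm (a *: X) <= `|a| * nuclear_norm X.
Proof.
have [Q e <-] := nuclear_norm_attained X.
by rewrite -factor_normZ -{1}e scalemxAl; exact: nuclear_norm_le_factor_norm.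
Qed.

Lemma convex_nuclear_norm m n : convex_fun (@nuclear_norm R m n).
Proof.
move=> X Y t t0 t1; apply: le_trans (ler_nuclear_normD _ _) _.
by apply: lerD; apply: le_trans (ler_nuclear_normZ _ _) _; rewrite ger0_norm ?subr_ge0.
Qed.

Lemma right_singular_rank_one_sum m n (X : 'M[R]_(m, n)) (Q : 'M[R]_n) :
  Q^T *m Q = 1%:M ->
  X = \sum_k col_norm (X *m Q) k *: (col k (normalize_cols (X *m Q)) *m (col k Q)^T).
Proof.
move=> QQ; rewrite -{1}[X]mulmx1 -(mulmx1C QQ) mulmxA mulmx_trmx_col_sum.
by apply: eq_bigr => k _; rewrite scalemxAl -col_normalize_cols.
Qed.

End NuclearNorm.

Section Convexity.
Variables (R : realType) (m n : nat).
Implicit Types (g h : 'M[R]_(m, n) -> R).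

Lemma convex_fun_sum g d (t : 'I_d -> R) (Y : 'I_d -> 'M[R]_(m, n)) :
  convex_fun g -> (forall k, 0 <= t k) -> \sum_k t k = 1 ->
  g (\sum_k t k *: Y k) <= \sum_k t k * g (Y k).
Proof.
move=> gc; elim: d t Y => [|d IH] t Y t0.
  by rewrite big_ord0 => /eqP; rewrite eq_sym oner_eq0.
rewrite !big_ord_recr /=; set T := \sum_(k < d) _ => t1.
have T0 : 0 <= T by apply: sumr_ge0.
have tmax : t ord_max = 1 - T by rewrite -t1 addrAC subrr add0r.
have [T00|Tn0] := eqVneq T 0.
  have tz k : t (widen_ord (leqnSn d) k) = 0.
    by apply: (psumr_eq0P (P := predT) (F := fun k => t (widen_ord (leqnSn d) k))).
  rewrite tmax T00 subr0 scale1r mul1r !big1 ?add0r // => k _.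
    by rewrite tz mul0r.
  by rewrite tz scale0r.
pose t' k := t (widen_ord (leqnSn d) k) / T.
have -> : \sum_(k < d) t (widen_ord (leqnSn d) k) *: Y (widen_ord (leqnSn d) k) =
    T *: \sum_k t' k *: Y (widen_ord (leqnSn d) k).
  rewrite scaler_sumr; apply: eq_bigr => k _.
  by rewrite scalerA /t' mulrCA divff ?mulr1.
rewrite tmax; apply: le_trans (gc _ _ _ T0 _) _; first by rewrite -t1 lerDl.
rewrite lerD2r; apply: le_trans (ler_wpM2l T0 (IH t' _ _ _)) _.
- by move=> k; rewrite divr_ge0.
- by rewrite -mulr_suml divff.
by rewrite mulr_sumr; apply: ler_sum => k _; rewrite mulrA /t' mulrCA divff ?mulr1.
Qed.

Lemma convex_fun_scaled_sqr h c : 0 <= c -> (forall Y, 0 <= h Y) ->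
  convex_fun h -> convex_fun (fun Y => c * h Y ^+ 2).
Proof.
move=> c0 h0 hc X Y t t0 t1; have t1' : 0 <= 1 - t by rewrite subr_ge0.
rewrite (_ : t * _ + _ = c * (t * h X ^+ 2 + (1 - t) * h Y ^+ 2)) ?ler_wpM2l //;
  last by ring.
apply: (@le_trans _ _ ((t * h X + (1 - t) * h Y) ^+ 2)).
  by rewrite ler_sqr ?nnegrE ?addr_ge0 ?mulr_ge0 // hc.
rewrite -subr_ge0 (_ : _ - _ = t * (1 - t) * (h X - h Y) ^+ 2); last by ring.
by apply: mulr_ge0; [exact: mulr_ge0 | exact: sqr_ge0].
Qed.

End Convexity.

Lemma Omega_dropoutE (R : realType) m n d (U : 'M[R]_(m, d)) (V : 'M[R]_(n, d)) :
  Omega_dropout U V = \sum_k (col_norm U k * col_norm V k) ^+ 2.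
Proof. by apply: eq_bigr => k _; rewrite exprMn !col_norm_sqr. Qed.

Section Dropout.
Variables (R : realType) (p : R).
Hypotheses (p_gt0 : 0 < p) (p_lt1 : p < 1).
Let c := (1 - p) / p.

Let c_ge0 : 0 <= c.
Proof. by rewrite divr_ge0 ?subr_ge0 ?ltW. Qed.

Lemma theta_ratio d : (0 < d)%N -> (1 - theta p d) / theta p d = d%:R * c.
Proof.
case: d => // d _; rewrite /theta /c -natr1 /=.
have D0 : d%:R + 1 - d%:R * p != 0.
  rewrite (_ : _ - _ = d%:R * (1 - p) + 1); last by ring.
  by rewrite gt_eqF // ltr_pwDr // mulr_ge0 // subr_ge0 ltW.
by field; rewrite D0 gt_eqF.
Qed.

Lemma nuclear_norm_sqr_le_Lambda m n (X : 'M[R]_(m, n)) :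
  c * nuclear_norm X ^+ 2 <= Lambda p X.
Proof.
apply: lb_le_inf.
  exists ((1 - theta p (1 + n)) / theta p (1 + n) *
          Omega_dropout (row_mx (0 : 'M_(m, 1)) X) (row_mx 0 1%:M)).
  exists (1 + n)%N, (row_mx 0 X), (row_mx 0 1%:M); split => //.
    by rewrite (leq_trans (rank_leq_col X)) ?leq_addl.
  by rewrite tr_row_mx mul_row_col !trmx0 trmx1 mulmx0 mulmx1 add0r.
move=> _ [d [U [V [d_gt0 _ <- ->]]]].
rewrite theta_ratio // Omega_dropoutE -[X in _ <= X]mulrA [X in _ <= X]mulrCA.
rewrite ler_wpM2l //.
apply: le_trans (sqr_sum_le (fun k => col_norm U k * col_norm V k)).
rewrite ler_sqr ?nnegrE ?nuclear_norm_ge0 ?nuclear_norm_le_factor_norm //.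
by apply: sumr_ge0 => k _; rewrite mulr_ge0 ?col_norm_ge0.
Qed.

Lemma Lambda_rank1_le m n (u : 'cV[R]_m) (v : 'cV[R]_n) :
  Lambda p (u *m v^T) <= c * (col_norm u 0 * col_norm v 0) ^+ 2.
Proof.
apply: ge_inf.
  exists 0 => _ [d [U [V [d_gt0 _ _ ->]]]].
  rewrite theta_ratio // Omega_dropoutE; apply: mulr_ge0; first exact: mulr_ge0.
  by apply: sumr_ge0 => k _; exact: sqr_ge0.
exists 1%N, u, v; split => //.
  by rewrite (leq_trans (mxrankM_maxl _ _)) ?rank_leq_col.
by rewrite theta_ratio // mul1r Omega_dropoutE big_ord1.
Qed.

Lemma convex_minorant_Lambda_le m n (g : 'M[R]_(m, n) -> R) (X : 'M[R]_(m, n)) :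
  convex_fun g -> (forall Y, g Y <= Lambda p Y) -> g X <= c * nuclear_norm X ^+ 2.
Proof.
move=> gc gL; have [Q oQ] := right_singular_basis_exists X; have [QQ _] := oQ.
set S := nuclear_norm X; set G := X *m Q; set W := normalize_cols G.
have rank1 (u : 'cV_m) (v : 'cV_n) :
    g (u *m v^T) <= c * (col_norm u 0 * col_norm v 0) ^+ 2.
  exact: le_trans (gL _) (Lambda_rank1_le _ _).
have SE : S = \sum_k col_norm G k := nuclear_normE oQ.
have XE := right_singular_rank_one_sum X QQ; rewrite -/G -/W in XE.
have [S0|Sn0] := eqVneq S 0.
  have G0 k : col_norm G k = 0.
    apply: (psumr_eq0P (P := predT)) => // [i _|]; first exact: col_norm_ge0.
    by rewrite -SE.
  rewrite S0 expr0n mulr0 XE big1 => [|k _]; last by rewrite G0 scale0r.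
  have -> : (0 : 'M[R]_(m, n)) = 0 *m (0 : 'cV[R]_n)^T by rewrite mul0mx.
  by apply: le_trans (rank1 _ _) _; rewrite !col_norm0 mul0r expr0n mulr0.
have S_gt0 : 0 < S by rewrite lt_def Sn0 nuclear_norm_ge0.
pose t k := col_norm G k / S.
have t_ge0 k : 0 <= t k by rewrite divr_ge0 ?col_norm_ge0 ?ltW.
have t_sum : \sum_k t k = 1 by rewrite -mulr_suml -SE divff.
have -> : X = \sum_k t k *: (S *: (col k W *m (col k Q)^T)).
  by rewrite {1}XE; apply: eq_bigr => k _; rewrite scalerA divfK.
apply: le_trans (convex_fun_sum _ gc t_ge0 t_sum) _.
rewrite -[X in _ <= X]mul1r -t_sum mulr_suml; apply: ler_sum => k _.
rewrite ler_wpM2l // scalemxAl; apply: le_trans (rank1 _ _) _.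
have S_ge0 := ltW S_gt0.
rewrite col_normZ !col_norm_col col_norm_orthomx1 // mulr1 ler_wpM2l // ger0_norm //.
rewrite ler_sqr ?nnegrE ?mulr_ge0 ?col_norm_ge0 //.
by rewrite ler_piMr ?col_norm_normalize_cols_le1.
Qed.

End Dropout.

Theorem proposition2 (R : realType) (p : R) (hp0 : 0 < p) (hp1 : p < 1)
  (m n : nat) (X : 'M[R]_(m, n)) :
  lower_convex_envelope (@Lambda R p m n) X = (1 - p) / p * nuclear_norm X ^+ 2.
Proof.
have c_ge0 : 0 <= (1 - p) / p by rewrite divr_ge0 ?subr_ge0 ?ltW.
pose f Y := (1 - p) / p * @nuclear_norm R m n Y ^+ 2.
rewrite /lower_convex_envelope -/(f X); set E := (Y in sup Y).
have E_f : E (f X).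
  exists f; split => //; last exact: nuclear_norm_sqr_le_Lambda.
  apply: convex_fun_scaled_sqr c_ge0 _ (@convex_nuclear_norm _ _ _).
  exact: nuclear_norm_ge0.
have E_ub : ubound E (f X).
  by move=> _ [g [gc gL ->]]; exact: convex_minorant_Lambda_le.
apply/eqP; rewrite eq_le; apply/andP; split.
  exact: ge_sup (ex_intro _ _ E_f) E_ub.
by apply: sup_upper_bound => //; split; exists (f X).
Qed.
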